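(* Let $\ket{\phi}=w_0\ket{000}+w_1\ket{001}+w_2\ket{010}+w_3\ket{011}+w_4\ket{100}+w_5\ket{101}+w_6\ket{110}+w_7\ket{111}$ be a real 3-qubit state, i.e. $w_0,\dots,w_7\in\mathbb{R}$ with $\sum_i w_i^2=1$. Then there is a quantum circuit consisting of real local gates and at most four controlled-$Z$ gates that maps $\ket{\phi}$ to $\ket{000}$ (equivalently, whose inverse prepares $\ket{\phi}$ from $\ket{000}$). Moreover, if $$\Delta(\ket{\phi})=(w_0 w_7-w_1 w_6-w_2 w_5+w_3 w_4)^2-4 (w_1 w_2-w_0 w_3) (w_5 w_6-w_4 w_7)\ge 0,$$ then such a circuit exists using real local gates and at most three controlled-$Z$ gates.
   Context: A real local gate on three qubits is an operator $U_2\otimes U_1\otimes U_0$ where each $U_i$ is a $2\times 2$ real orthogonal matrix acting on one qubit. The two-qubit controlled-$Z$ gate is $cz=\mathrm{diag}(1,1,1,-1)$ in the basis $\ket{00},\ket{01},\ket{10},\ket{11}$; on three qubits (labelled $0,1,2$ from right to left, so in $\ket{q_2q_1q_0}$ qubit $0$ is the rightmost), $cz_{ij}$ denotes the controlled-$Z$ gate acting on qubits $i$ and $j$, i.e. it multiplies a basis state $\ket{q_2q_1q_0}$ by $-1$ exactly when $q_i=q_j=1$ and fixes it otherwise. A circuit is a finite composition of such gates. *)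

From HB Require Import structures.
From mathcomp Require Import all_boot all_order all_algebra.
From mathcomp Require Import reals.
Set Implicit Arguments. Unset Strict Implicit. Unset Printing Implicit Defensive.
Import Order.TTheory GRing.Theory Num.Theory.
Local Open Scope ring_scope.

(* Basis index k : 'I_8 encodes |q2 q1 q0> with k = 4 q2 + 2 q1 + q0.
   qbit i k = value (0/1) of qubit i in basis state k. *)
Definition qbit (i : 'I_3) (k : 'I_8) : 'I_2 := inord (odd (k %/ 2 ^ i)).

Section Gates.
Variable R : realType.

Definition orthogonal2 (U : 'M[R]_2) : Prop := U^T *m U = 1%:M.

(* U2 (x) U1 (x) U0, qubit 0 the rightmost tensor factor. *)
Definition local_mx (U2 U1 U0 : 'M[R]_2) : 'M[R]_8 :=
  \matrix_(a < 8, b < 8)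
    (U2 (qbit 2 a) (qbit 2 b) * U1 (qbit 1 a) (qbit 1 b) * U0 (qbit 0 a) (qbit 0 b)).

Definition cz_mx (i j : 'I_3) : 'M[R]_8 :=
  \matrix_(a < 8, b < 8)
    (if a == b then (if (odd (a %/ 2 ^ i)) && (odd (a %/ 2 ^ j)) then -1 else 1)
     else 0).

Inductive gate : Type :=
  | GLocal of 'M[R]_2 & 'M[R]_2 & 'M[R]_2
  | GCZ of 'I_3 & 'I_3.

Definition gate_ok (g : gate) : Prop :=
  match g with
  | GLocal U2 U1 U0 => [/\ orthogonal2 U2, orthogonal2 U1 & orthogonal2 U0]
  | GCZ i j => i != j
  end.

Definition gate_mx (g : gate) : 'M[R]_8 :=
  match g with
  | GLocal U2 U1 U0 => local_mx U2 U1 U0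
  | GCZ i j => cz_mx i j
  end.

Definition is_cz (g : gate) : bool := if g is GCZ _ _ then true else false.

(* A circuit is a list of gates; the head of the list is applied first. *)
Definition circuit_mx (c : seq gate) : 'M[R]_8 :=
  foldl (fun acc g => gate_mx g *m acc) 1%:M c.

Definition circuit_ok (c : seq gate) : Prop := foldr (fun g P => gate_ok g /\ P) True c.

Definition num_cz (c : seq gate) : nat := count is_cz c.

Definition amp (phi : 'cV[R]_8) (k : nat) : R := phi (inord k) 0.

Definition ket000 : 'cV[R]_8 := \col_(a < 8) (if a == ord0 then 1 else 0).

Definition Delta (phi : 'cV[R]_8) : R :=
  let w := amp phi in
  (w 0%N * w 7%N - w 1%N * w 6%N - w 2%N * w 5%N + w 3%N * w 4%N) ^+ 2
  - 4 * (w 1%N * w 2%N - w 0%N * w 3%N) * (w 5%N * w 6%N - w 4%N * w 7%N).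

End Gates.
Arguments ket000 {R}.

From HB Require Import structures.
From mathcomp Require Import all_boot all_order all_algebra.
From mathcomp Require Import reals.
From mathcomp Require Import ring.
Import Order.TTheory GRing.Theory Num.Theory.
Local Open Scope ring_scope.

(* A rotation on qubit 2 replaces the top half (w0, ..., w3) of the state, read
   as a 2x2 matrix, by c (w0, ..., w3) + s (w4, ..., w7); its determinant is a
   binary quadratic form in (c, s) with discriminant Delta. So when Delta >= 0
   the top half can be made singular, i.e. a product state of qubits 1 and 0,
   which rotations on those qubits collapse onto |000>. The bottom half is then
   cleared by three controlled reflections, each costing one CZ, and a last
   rotation on qubit 2 reaches |000>. When Delta < 0, a CZ on qubits 1 and 2
   flips the sign of the product term of Delta, which makes it positive. *)

Local Notation norm2 x y := (Num.sqrt (x ^+ 2 + y ^+ 2)).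

Section PlaneGeometry.
Context {R : rcfType}.
Implicit Types a b d c s x y : R.

Lemma sqr_norm2 x y : norm2 x y ^+ 2 = x ^+ 2 + y ^+ 2.
Proof. by rewrite sqr_sqrtr // addr_ge0 ?sqr_ge0. Qed.

Lemma norm2_eq0 x y : (norm2 x y == 0) = (x == 0) && (y == 0).
Proof. by rewrite -sqrf_eq0 sqr_norm2 paddr_eq0 ?sqr_ge0 // !sqrf_eq0. Qed.

Lemma normalized_sumsq x y : (x != 0) || (y != 0) ->
  (x / norm2 x y) ^+ 2 + (y / norm2 x y) ^+ 2 = 1.
Proof.
rewrite -negb_and -norm2_eq0 => r_neq0.
by rewrite !expr_div_n -mulrDl sqr_norm2 divff // -sqr_norm2 sqrf_eq0.
Qed.

Lemma rotation_to_axis x y : exists c s,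
  [/\ c ^+ 2 + s ^+ 2 = 1, c * x + s * y = norm2 x y & - s * x + c * y = 0].
Proof.
have [/andP[/eqP-> /eqP->] | xy_neq0] := boolP ((x == 0) && (y == 0)).
  by exists 1, 0; rewrite expr0n /= !addr0 sqrtr0; split; ring.
set r := norm2 x y; have r_neq0 : r != 0 by rewrite norm2_eq0.
exists (x / r), (y / r); split; first by apply: normalized_sumsq; rewrite -negb_and.
  by rewrite -[RHS](mulfK r_neq0) -expr2 sqr_norm2; ring.
by ring.
Qed.

(* the reflection across the line through (c, s), when c ^+ 2 + s ^+ 2 = 1 *)
Definition refl1 c s x y := (c ^+ 2 - s ^+ 2) * x + 2 * c * s * y.
Definition refl2 c s x y := 2 * c * s * x + (s ^+ 2 - c ^+ 2) * y.

Lemma reflection_to_axis x y : exists c s,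
  [/\ c ^+ 2 + s ^+ 2 = 1, refl1 c s x y = norm2 x y & refl2 c s x y = 0].
Proof.
set n := norm2 x y; have n2 : n ^+ 2 = x ^+ 2 + y ^+ 2 := sqr_norm2 x y.
have [/andP[/eqP y0 x_le0] | ] := boolP ((y == 0) && (x <= 0)).
  exists 0, 1; rewrite /refl1 /refl2 /n y0 [0 ^+ 2]expr2 mulr0 addr0.
  by rewrite sqrtr_sqr ler0_norm //; split; ring.
rewrite negb_and -ltNge => y_neq0_or_x_gt0.
have d_neq0 : (x + n != 0) || (y != 0).
  case/orP: y_neq0_or_x_gt0 => [-> | x_gt0]; first by rewrite orbT.
  by rewrite gt_eqF // (lt_le_trans x_gt0) // lerDl sqrtr_ge0.
(* reflect across the bisector (x + n, y) of (x, y) and the first axis *)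
set r := norm2 (x + n) y; have r2 : r ^+ 2 = (x + n) ^+ 2 + y ^+ 2 := sqr_norm2 _ _.
have r_neq0 : r != 0 by rewrite norm2_eq0 negb_and.
have r2_neq0 : r ^+ 2 != 0 := expf_neq0 2 r_neq0.
exists ((x + n) / r), (y / r); split; first exact: normalized_sumsq.
  have -> : refl1 ((x + n) / r) (y / r) x y = refl1 (x + n) y x y / r ^+ 2.
    by rewrite /refl1; field.
  have -> : refl1 (x + n) y x y =
      n * r ^+ 2 + (x + n) * (x ^+ 2 + y ^+ 2 - n ^+ 2) by rewrite /refl1 r2; ring.
  by rewrite n2 subrr mulr0 addr0 mulfK.
have -> : refl2 ((x + n) / r) (y / r) x y = refl2 (x + n) y x y / r ^+ 2.
  by rewrite /refl2; field.
have -> : refl2 (x + n) y x y = y * (x ^+ 2 + y ^+ 2 - n ^+ 2) by rewrite /refl2; ring.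
by rewrite n2 subrr mulr0 mul0r.
Qed.

Lemma binary_quadratic_unit_root a b d : 0 <= b ^+ 2 - 4 * a * d ->
  exists c s, c ^+ 2 + s ^+ 2 = 1 /\ a * c ^+ 2 + b * c * s + d * s ^+ 2 = 0.
Proof.
move=> disc_ge0.
have [-> | a_neq0] := eqVneq a 0; first by exists 1, 0; split; ring.
set disc := b ^+ 2 - 4 * a * d.
set x := - b + Num.sqrt disc; set y := 2 * a.
have y_neq0 : y != 0 by rewrite mulf_neq0 // pnatr_eq0.
set r := norm2 x y; have r_neq0 : r != 0 by rewrite norm2_eq0 negb_and y_neq0 orbT.
exists (x / r), (y / r); split; first by apply: normalized_sumsq; rewrite y_neq0 orbT.
have -> : a * (x / r) ^+ 2 + b * (x / r) * (y / r) + d * (y / r) ^+ 2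
    = a * (Num.sqrt disc ^+ 2 - disc) / r ^+ 2 by rewrite /x /y /disc; field.
by rewrite sqr_sqrtr // subrr mulr0 mul0r.
Qed.

Lemma rotation_singular_row0 {u0 u1 u2 u3} : u0 * u3 = u1 * u2 ->
  exists c s, [/\ c ^+ 2 + s ^+ 2 = 1, - s * u0 + c * u2 = 0 & - s * u1 + c * u3 = 0].
Proof.
move=> det0.
have [/andP[/eqP-> /eqP->] | col_neq0] := boolP ((u0 == 0) && (u2 == 0)).
  have [c [s [cs1 _ row0]]] := rotation_to_axis u1 u3.
  by exists c, s; split=> //; ring.
set r := norm2 u0 u2; have r_neq0 : r != 0 by rewrite norm2_eq0.
exists (u0 / r), (u2 / r); split; first by apply: normalized_sumsq; rewrite -negb_and.
  by field.
have -> : - (u2 / r) * u1 + u0 / r * u3 = (u0 * u3 - u1 * u2) / r by field.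
by rewrite det0 subrr mul0r.
Qed.

End PlaneGeometry.

Lemma inord_eqE {n} i j : (i <= n)%N -> (j <= n)%N ->
  ((inord i : 'I_n.+1) == inord j) = (i == j).
Proof. by move=> le_in le_jn; rewrite -(inj_eq val_inj) /= !inordK. Qed.

Section Circuits.
Context {R : realType}.

Definition col8 (x0 x1 x2 x3 x4 x5 x6 x7 : R) : 'cV[R]_8 :=
  \col_(k < 8) nth 0 [:: x0; x1; x2; x3; x4; x5; x6; x7] k.

Definition sqnorm (v : 'cV[R]_8) : R := \sum_(k < 8) v k 0 ^+ 2.

(* The norm is recorded so that the amplitude finally reached is known to be 1. *)
Definition reachable (k : nat) (v w : 'cV[R]_8) : Prop :=
  sqnorm w = sqnorm v /\
  exists c : seq (gate R),
    circuit_ok c /\ (num_cz c <= k)%N /\ circuit_mx c *m v = w.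

Lemma foldl_gate_mx (c : seq (gate R)) (A : 'M[R]_8) :
  foldl (fun acc g => gate_mx g *m acc) A c = circuit_mx c *m A.
Proof.
elim: c A => [|g c IHc] A; first by rewrite /circuit_mx /= mul1mx.
by rewrite /circuit_mx /= !IHc mulmx1 mulmxA.
Qed.

Lemma circuit_mx_cat (c1 c2 : seq (gate R)) :
  circuit_mx (c1 ++ c2) = circuit_mx c2 *m circuit_mx c1.
Proof. by rewrite {1}/circuit_mx foldl_cat foldl_gate_mx. Qed.

Lemma circuit_ok_cat (c1 c2 : seq (gate R)) :
  circuit_ok c1 -> circuit_ok c2 -> circuit_ok (c1 ++ c2).
Proof. by elim: c1 => [|g c1 IHc1] //= [ok_g ok_c1] ok_c2; split; last exact: IHc1. Qed.

Lemma reachable_trans {k1 k2 u v w} :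
  reachable k1 u v -> reachable k2 v w -> reachable (k1 + k2) u w.
Proof.
move=> [norm_uv [c1 [ok1 [cz1 mx1]]]] [norm_vw [c2 [ok2 [cz2 mx2]]]].
split; first by rewrite norm_vw norm_uv.
exists (c1 ++ c2); split; first exact: circuit_ok_cat.
by rewrite /num_cz count_cat leq_add // circuit_mx_cat -mulmxA mx1 mx2.
Qed.

Lemma reachable_leq {k1 k2 v w} : (k1 <= k2)%N -> reachable k1 v w -> reachable k2 v w.
Proof.
move=> le_k [norm_vw [c [ok [cz mx]]]]; split=> //.
by exists c; split=> //; split=> //; apply: leq_trans le_k.
Qed.

Lemma reachable_gate {g : gate R} {v w} : gate_ok g ->
  gate_mx g *m v = w -> sqnorm w = sqnorm v -> reachable (is_cz g) v w.
Proof.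
move=> ok_g mx_g norm_vw; split=> //; exists [:: g].
by rewrite /num_cz /= addn0 /circuit_mx /= mulmx1.
Qed.

Lemma sum8 (F : 'I_8 -> R) : \sum_(k < 8) F k =
  F (inord 0) + F (inord 1) + F (inord 2) + F (inord 3) +
  F (inord 4) + F (inord 5) + F (inord 6) + F (inord 7).
Proof.
rewrite !big_ord_recr big_ord0 /= add0r.
by congr (_ + _ + _ + _ + _ + _ + _ + _); congr F; apply/val_inj; rewrite /= inordK.
Qed.

Lemma col8E x0 x1 x2 x3 x4 x5 x6 x7 k : (k < 8)%N ->
  col8 x0 x1 x2 x3 x4 x5 x6 x7 (inord k) 0 = nth 0 [:: x0; x1; x2; x3; x4; x5; x6; x7] k.
Proof. by move=> lt_k8; rewrite mxE inordK. Qed.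

Lemma sqnorm_col8 x0 x1 x2 x3 x4 x5 x6 x7 :
  sqnorm (col8 x0 x1 x2 x3 x4 x5 x6 x7) =
  x0 ^+ 2 + x1 ^+ 2 + x2 ^+ 2 + x3 ^+ 2 + x4 ^+ 2 + x5 ^+ 2 + x6 ^+ 2 + x7 ^+ 2.
Proof. by rewrite /sqnorm sum8 !col8E. Qed.

Lemma col8_amp (phi : 'cV[R]_8) : phi =
  col8 (amp phi 0) (amp phi 1) (amp phi 2) (amp phi 3)
       (amp phi 4) (amp phi 5) (amp phi 6) (amp phi 7).
Proof.
apply/matrixP => i j; rewrite ord1 -{2}(inord_val i) col8E // -{1}(inord_val i).
by case: i => [[|[|[|[|[|[|[|[|//]]]]]]]] lt_i8].
Qed.

Lemma ket000_col8 : ket000 = col8 1 0 0 0 0 0 0 0.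
Proof.
apply/matrixP => i j; rewrite ord1 -{2}(inord_val i) col8E // mxE.
by case: i => [[|[|[|[|[|[|[|[|//]]]]]]]] lt_i8].
Qed.

Lemma Delta_col8 a0 a1 a2 a3 a4 a5 a6 a7 :
  Delta (col8 a0 a1 a2 a3 a4 a5 a6 a7) =
  (a0 * a7 - a1 * a6 - a2 * a5 + a3 * a4) ^+ 2
  - 4 * (a1 * a2 - a0 * a3) * (a5 * a6 - a4 * a7).
Proof. by rewrite /Delta /amp !col8E. Qed.

Definition rot_mx (c s : R) : 'M[R]_2 :=
  \matrix_(i < 2, j < 2) nth 0 [:: c; s; - s; c] (2 * i + j).

Lemma orthogonal2_rot_mx c s : c ^+ 2 + s ^+ 2 = 1 -> orthogonal2 (rot_mx c s).
Proof.
move=> cs1; apply/matrixP => i j; rewrite -(inord_val i) -(inord_val j) !mxE.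
rewrite !big_ord_recr big_ord0 /= add0r !mxE inord_eqE ?leq_ord //.
by case: i j => [[|[|//]] ?] [[|[|//]] ?]; rewrite /= !inordK //= -?cs1; ring.
Qed.

Lemma orthogonal2_1 : orthogonal2 (1%:M : 'M[R]_2).
Proof. by rewrite /orthogonal2 trmx1 mulmx1. Qed.

Definition rot_gate (i : nat) (c s : R) : gate R :=
  let U q := if i == q then rot_mx c s else 1%:M in GLocal (U 2%N) (U 1%N) (U 0%N).

Lemma rot_gate_ok i {c s} : c ^+ 2 + s ^+ 2 = 1 -> gate_ok (rot_gate i c s).
Proof.
move=> cs1; have ok q : orthogonal2 (if i == q then rot_mx c s else 1%:M).
  by case: ifP => _; [exact: orthogonal2_rot_mx | exact: orthogonal2_1].
by split; apply: ok.
Qed.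

Lemma cz_gate_ok i j : (i < 3)%N -> (j < 3)%N -> i != j ->
  gate_ok (GCZ R (inord i) (inord j)).
Proof. by move=> lt_i3 lt_j3 neq_ij; rewrite /= inord_eqE. Qed.

Ltac col8_entrywise :=
  apply/matrixP => -[[|[|[|[|[|[|[|[|//]]]]]]]] lt_i8] j;
  rewrite ord1 !mxE sum8 /=;
  rewrite !mxE /qbit -?(inj_eq val_inj) /= !inordK //=; ring.

Section GateActions.
Context {c s x0 x1 x2 x3 x4 x5 x6 x7 : R}.
Hypothesis cs1 : c ^+ 2 + s ^+ 2 = 1.
Local Notation x := (col8 x0 x1 x2 x3 x4 x5 x6 x7).

Lemma reachable_rot2 : reachable 0 x
  (col8 (c * x0 + s * x4) (c * x1 + s * x5) (c * x2 + s * x6) (c * x3 + s * x7)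
        (- s * x0 + c * x4) (- s * x1 + c * x5) (- s * x2 + c * x6) (- s * x3 + c * x7)).
Proof.
apply: (reachable_gate (rot_gate_ok 2 cs1)); first by col8_entrywise.
by rewrite !sqnorm_col8 -[RHS]mul1r -cs1; ring.
Qed.

Lemma reachable_rot1 : reachable 0 x
  (col8 (c * x0 + s * x2) (c * x1 + s * x3) (- s * x0 + c * x2) (- s * x1 + c * x3)
        (c * x4 + s * x6) (c * x5 + s * x7) (- s * x4 + c * x6) (- s * x5 + c * x7)).
Proof.
apply: (reachable_gate (rot_gate_ok 1 cs1)); first by col8_entrywise.
by rewrite !sqnorm_col8 -[RHS]mul1r -cs1; ring.
Qed.

Lemma reachable_rot0 : reachable 0 x
  (col8 (c * x0 + s * x1) (- s * x0 + c * x1) (c * x2 + s * x3) (- s * x2 + c * x3)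
        (c * x4 + s * x5) (- s * x4 + c * x5) (c * x6 + s * x7) (- s * x6 + c * x7)).
Proof.
apply: (reachable_gate (rot_gate_ok 0 cs1)); first by col8_entrywise.
by rewrite !sqnorm_col8 -[RHS]mul1r -cs1; ring.
Qed.

Lemma reachable_cz01 : reachable 1 x (col8 x0 x1 x2 (- x3) x4 x5 x6 (- x7)).
Proof.
by apply: (reachable_gate (@cz_gate_ok 0 1 isT isT isT));
  [col8_entrywise | rewrite !sqnorm_col8 !sqrrN].
Qed.

Lemma reachable_cz02 : reachable 1 x (col8 x0 x1 x2 x3 x4 (- x5) x6 (- x7)).
Proof.
by apply: (reachable_gate (@cz_gate_ok 0 2 isT isT isT));
  [col8_entrywise | rewrite !sqnorm_col8 !sqrrN].
Qed.

Lemma reachable_cz12 : reachable 1 x (col8 x0 x1 x2 x3 x4 x5 (- x6) (- x7)).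
Proof.
by apply: (reachable_gate (@cz_gate_ok 1 2 isT isT isT));
  [col8_entrywise | rewrite !sqnorm_col8 !sqrrN].
Qed.

End GateActions.

(* Conjugating a CZ by a rotation of its target qubit reflects the target
   exactly when the control qubit is 1. *)
Section ControlledReflections.
Context {c s x0 x1 x2 x3 x4 x5 x6 x7 : R}.
Hypothesis cs1 : c ^+ 2 + s ^+ 2 = 1.
Local Notation x := (col8 x0 x1 x2 x3 x4 x5 x6 x7).

Let cs1N : c ^+ 2 + (- s) ^+ 2 = 1. Proof. by rewrite sqrrN. Qed.

Lemma reachable_crefl01 : reachable 1 x
  (col8 x0 x1 (refl1 c s x2 x3) (refl2 c s x2 x3) x4 x5 (refl1 c s x6 x7) (refl2 c s x6 x7)).
Proof.
apply: eq_ind (reachable_trans (reachable_rot0 cs1)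
                 (reachable_trans reachable_cz01 (reachable_rot0 cs1N))) _ _.
by congr col8; rewrite /refl1 /refl2; first [ring | rewrite -[RHS]mul1r -cs1; ring].
Qed.

Lemma reachable_crefl02 : reachable 1 x
  (col8 x0 x1 x2 x3 (refl1 c s x4 x5) (refl2 c s x4 x5) (refl1 c s x6 x7) (refl2 c s x6 x7)).
Proof.
apply: eq_ind (reachable_trans (reachable_rot0 cs1)
                 (reachable_trans reachable_cz02 (reachable_rot0 cs1N))) _ _.
by congr col8; rewrite /refl1 /refl2; first [ring | rewrite -[RHS]mul1r -cs1; ring].
Qed.

Lemma reachable_crefl12 : reachable 1 x
  (col8 x0 x1 x2 x3 (refl1 c s x4 x6) (refl1 c s x5 x7) (refl2 c s x4 x6) (refl2 c s x5 x7)).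
Proof.
apply: eq_ind (reachable_trans (reachable_rot1 cs1)
                 (reachable_trans reachable_cz12 (reachable_rot1 cs1N))) _ _.
by congr col8; rewrite /refl1 /refl2; first [ring | rewrite -[RHS]mul1r -cs1; ring].
Qed.

End ControlledReflections.

Lemma reachable0_collapse_top {a0 a1 a2 a3 a4 a5 a6 a7} :
  0 <= Delta (col8 a0 a1 a2 a3 a4 a5 a6 a7) ->
  exists t0 t4 t5 t6 t7,
    reachable 0 (col8 a0 a1 a2 a3 a4 a5 a6 a7) (col8 t0 0 0 0 t4 t5 t6 t7).
Proof.
rewrite Delta_col8 => disc_ge0.
have [c [s [cs1 det0]]] : exists c s, c ^+ 2 + s ^+ 2 = 1 /\
    (a0 * a3 - a1 * a2) * c ^+ 2 + (a0 * a7 - a1 * a6 - a2 * a5 + a3 * a4) * c * s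
    + (a4 * a7 - a5 * a6) * s ^+ 2 = 0.
  apply: binary_quadratic_unit_root.
  by rewrite (_ : 4 * _ * _ = 4 * (a1 * a2 - a0 * a3) * (a5 * a6 - a4 * a7)) //; ring.
have top_singular :
    (c * a0 + s * a4) * (c * a3 + s * a7) = (c * a1 + s * a5) * (c * a2 + s * a6).
  by apply/eqP; rewrite -subr_eq0 -det0; apply/eqP; ring.
have [c' [s' [cs1' row0 row1]]] := rotation_singular_row0 top_singular.
set y0 := c' * (c * a0 + s * a4) + s' * (c * a2 + s * a6).
set y1 := c' * (c * a1 + s * a5) + s' * (c * a3 + s * a7).
have [c'' [s'' [cs1'' _ e1]]] := rotation_to_axis y0 y1.
have := reachable_trans (reachable_rot2 cs1 : reachable _ (col8 a0 a1 a2 a3 a4 a5 a6 a7) _)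
          (reachable_trans (reachable_rot1 cs1') (reachable_rot0 cs1'')).
rewrite -/y0 -/y1 row0 row1 e1 !mulr0 !addr0 => reach.
by do 5 eexists; exact: reach.
Qed.

Lemma reachable2_collapse_bottom t0 t4 t5 t6 t7 : exists p q,
  reachable 2 (col8 t0 0 0 0 t4 t5 t6 t7) (col8 t0 0 0 0 p 0 q 0).
Proof.
have [c [s [cs1 e4 e5]]] := reflection_to_axis t4 t5.
have [c' [s' [cs1' _ e7]]] := reflection_to_axis (refl1 c s t6 t7) (refl2 c s t6 t7).
have := reachable_trans (reachable_crefl02 cs1 : reachable _ (col8 t0 0 0 0 t4 t5 t6 t7) _)
          (reachable_crefl01 cs1').
rewrite e4 e5 e7 [refl1 _ _ 0 0]/refl1 [refl2 _ _ 0 0]/refl2 !(mulr0, addr0) => reach.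
by do 2 eexists; exact: reach.
Qed.

Lemma reachable1_collapse m p q :
  reachable 1 (col8 m 0 0 0 p 0 q 0) (col8 (norm2 m (norm2 p q)) 0 0 0 0 0 0 0).
Proof.
have [c [s [cs1 e4 e6]]] := reflection_to_axis p q.
have [c' [s' [cs1' e0 e4']]] := rotation_to_axis m (norm2 p q).
have := reachable_trans (reachable_crefl12 cs1 : reachable _ (col8 m 0 0 0 p 0 q 0) _)
          (reachable_rot2 cs1').
by rewrite e4 e6 /refl1 /refl2 !(mulr0, addr0) e0 e4'.
Qed.

Lemma reachable_ket000 {k v r} : sqnorm v = 1 -> 0 <= r ->
  reachable k v (col8 r 0 0 0 0 0 0 0) -> reachable k v ket000.
Proof.
move=> v1 r_ge0 reach; have r1 : r = 1.
  have := reach.1; rewrite v1 sqnorm_col8 expr0n /= !addr0 => r2.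
  by rewrite -(ger0_norm r_ge0) -sqrtr_sqr r2 sqrtr1.
by rewrite ket000_col8 -r1.
Qed.

Lemma reachable3_ket000 {a0 a1 a2 a3 a4 a5 a6 a7} :
  sqnorm (col8 a0 a1 a2 a3 a4 a5 a6 a7) = 1 ->
  0 <= Delta (col8 a0 a1 a2 a3 a4 a5 a6 a7) ->
  reachable 3 (col8 a0 a1 a2 a3 a4 a5 a6 a7) ket000.
Proof.
move=> a_unit disc_ge0.
have [t0 [t4 [t5 [t6 [t7 reach_top]]]]] := reachable0_collapse_top disc_ge0.
have [p [q reach_bottom]] := reachable2_collapse_bottom t0 t4 t5 t6 t7.
apply: (reachable_ket000 a_unit (sqrtr_ge0 _)).
exact: reachable_trans (reachable_trans reach_top reach_bottom) (reachable1_collapse t0 p q).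
Qed.

Lemma Delta_cz12_ge0 {a0 a1 a2 a3 a4 a5 a6 a7} :
  Delta (col8 a0 a1 a2 a3 a4 a5 a6 a7) < 0 ->
  0 <= Delta (col8 a0 a1 a2 a3 a4 a5 (- a6) (- a7)).
Proof.
rewrite !Delta_col8 subr_lt0.
set P := 4 * (a1 * a2 - a0 * a3) * (a5 * a6 - a4 * a7) => lt_sqr_P.
rewrite (_ : 4 * _ * _ = - P); last by rewrite /P; ring.
by rewrite opprK addr_ge0 ?sqr_ge0 // ltW // (le_lt_trans (sqr_ge0 _) lt_sqr_P).
Qed.

End Circuits.

Theorem mainTheorem1 (R : realType) (phi : 'cV[R]_8) :
  \sum_(k < 8) phi k 0 ^+ 2 = 1 ->
  (exists c : seq (gate R),
      circuit_ok c /\ (num_cz c <= 4)%N /\ circuit_mx c *m phi = ket000) /\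
  (0 <= Delta phi ->
   exists c : seq (gate R),
      circuit_ok c /\ (num_cz c <= 3)%N /\ circuit_mx c *m phi = ket000).
Proof.
rewrite [phi]col8_amp; move: (amp phi 0) (amp phi 1) (amp phi 2) (amp phi 3)
  (amp phi 4) (amp phi 5) (amp phi 6) (amp phi 7) => a0 a1 a2 a3 a4 a5 a6 a7 a_unit.
have three_cz := reachable3_ket000 a_unit.
split; last by move=> /three_cz[].
have [/three_cz | /Delta_cz12_ge0 disc_ge0] := lerP 0 (Delta (col8 a0 a1 a2 a3 a4 a5 a6 a7)).
  by move=> /(reachable_leq (isT : 3 <= 4)%N)[].
have flip := @reachable_cz12 _ a0 a1 a2 a3 a4 a5 a6 a7.
by case: (reachable_trans flip (reachable3_ket000 (etrans flip.1 a_unit) disc_ge0)).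
Qed.
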